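(* Let $m\geqslant 8$ with $m\equiv 0\pmod 4$, $d=(m-2)/2$, and $f(x)=x^{m-1}$. For every $\alpha\in\mathbb F_{2^n}^*$, the polynomial $(L_\alpha f)'$ has exactly $(d-1)/2$ distinct double roots in $\overline{\mathbb F}_2$, namely $\tau_1,\dots,\tau_{(d-1)/2}$ given by $\tau_i=\frac{\alpha^2}{1+\theta_i}+\frac{\alpha^2}{1+\theta_i^2}$, where $\theta_1,\dots,\theta_{(d-1)/2}$ are $(d-1)/2$ distinct $d$-th roots of unity in $\overline{\mathbb F}_2\setminus\{1\}$ chosen such that $\theta_i\theta_j\neq 1$ for $i\neq j$.
   Context: $D_\alpha f(x)=f(x+\alpha)+f(x)$. For $m\equiv 0\pmod 4$, $d=(m-2)/2$ and $f$ of degree at most $m$, $L_\alpha f$ is the unique polynomial of degree at most $d$ such that $(L_\alpha f)(x(x+\alpha))=D_\alpha f(x)$. *)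

From HB Require Import structures.
From mathcomp Require Import all_boot all_order all_algebra.
Set Implicit Arguments. Unset Strict Implicit. Unset Printing Implicit Defensive.
Import GRing.Theory.
Local Open Scope ring_scope.

Definition Dalpha (K : fieldType) (alpha : K) (f : {poly K}) : {poly K} :=
  f \Po ('X + alpha%:P) + f.

Definition is_Lalpha (K : fieldType) (d : nat) (alpha : K) (f g : {poly K}) : Prop :=
  (size g <= d.+1)%N /\ g \Po ('X * ('X + alpha%:P)) = Dalpha alpha f.

Definition tau_of (K : fieldType) (alpha theta : K) : K :=
  alpha ^+ 2 / (1 + theta) + alpha ^+ 2 / (1 + theta ^+ 2).

From HB Require Import structures.
From mathcomp Require Import all_boot all_order all_algebra.
From mathcomp Require Import ring zify.
Set Implicit Arguments.
Unset Strict Implicit.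
Unset Printing Implicit Defensive.
Import GRing.Theory.
Local Open Scope ring_scope.

(* In characteristic 2 the substitution x -> x + alpha is an involution, and
   every polynomial it fixes is a polynomial in u = x (x + alpha); applied to
   D_alpha f this gives L_alpha f.  For f = x^(2d+1), differentiating
   g(u) = D_alpha f gives alpha g'(u) = ((x + alpha)^d + x^d)^2.  The polynomial
   (x + alpha)^d + x^d has degree at most d - 1 and the d - 1 distinct roots
   alpha / (1 + theta), theta^d = 1, theta <> 1; the roots for theta and
   theta^-1 differ by alpha, so they pair up into the factors u - tau(theta).
   Hence g' is a nonzero constant times (prod_i (X - tau_i))^2. *)

Lemma exprn_eq1_neq0 (R : nzRingType) (x : R) (n : nat) :
  (0 < n)%N -> x ^+ n = 1 -> x != 0.
Proof.
move=> n0 xn; apply/eqP => x0; move: xn; rewrite x0 expr0n eqn0Ngt n0 => /eqP.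
by rewrite eq_sym oner_eq0.
Qed.

Lemma sqrrD_pchar2 (R : comNzRingType) (x y : R) :
  2%N \in [pchar R] -> (x + y) ^+ 2 = x ^+ 2 + y ^+ 2.
Proof. by move=> h2; rewrite sqrrD mulr2n addrr_pchar2 // addr0. Qed.

Lemma comp_poly_inj (R : idomainType) (q : {poly R}) :
  (1 < size q)%N -> injective (comp_poly q).
Proof.
move=> hq p1 p2 e; apply/eqP; rewrite -subr_eq0 -(comp_poly_eq0 _ hq).
by rewrite comp_polyB e subrr.
Qed.

Lemma all_roots_prod_XsubC_leq (F : fieldType) (p : {poly F}) (rs : seq F) :
  p != 0 -> (size p <= (size rs).+1)%N -> all (root p) rs -> uniq rs ->
  p = lead_coef p *: \prod_(z <- rs) ('X - z%:P).
Proof.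
move=> p0 hs hroot hrs; apply: all_roots_prod_XsubC => //; last by rewrite uniq_rootsE.
by apply/eqP; rewrite eqn_leq hs (max_poly_roots p0 hroot hrs).
Qed.

Lemma mup_sqr_prod_XsubC (F : fieldType) (c x : F) (s : seq F) :
  c != 0 -> uniq s ->
  mup x (c%:P * (\prod_(y <- s) ('X - y%:P)) ^+ 2) = if x \in s then 2%N else 0%N.
Proof.
move=> c0 us; rewrite mupMr ?rootC // expr2 -big_cat mu_prod_XsubC count_cat.
by rewrite count_uniq_mem //; case: (x \in s).
Qed.

Section Char2.
Variables (K : fieldType) (hK : 2%N \in [pchar K]) (alpha : K).

Local Notation shift := ('X + alpha%:P).
Local Notation u := ('X * ('X + alpha%:P)).

Lemma add1r_eq0 (t : K) : (1 + t == 0) = (t == 1).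
Proof. by rewrite addr_eq0 oppr_pchar2 // eq_sym. Qed.

Lemma pchar2_poly : 2%N \in [pchar {poly K}].
Proof. by rewrite pchar_poly. Qed.

Lemma shiftK : shift \Po shift = 'X.
Proof. by rewrite comp_polyD comp_polyX comp_polyC -addrA -polyCD addrr_pchar2 // addr0. Qed.

Lemma u_comp_shift : u \Po shift = u.
Proof. by rewrite comp_polyM shiftK comp_polyX mulrC. Qed.

Lemma size_u : size u = 3%N.
Proof. by rewrite size_mul ?size_polyX ?size_XaddC ?polyX_eq0 // -size_poly_eq0 size_XaddC. Qed.

Lemma deriv_u : u^`() = alpha%:P.
Proof. by rewrite derivM derivD derivC derivX addr0 mul1r mulr1 addrC addrA addrr_pchar2 ?pchar2_poly // add0r. Qed.

Lemma Dalpha_comp_shift (f : {poly K}) : Dalpha alpha f \Po shift = Dalpha alpha f.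
Proof. by rewrite /Dalpha comp_polyD -comp_polyA shiftK comp_polyXr addrC. Qed.

Lemma size_Dalpha (f : {poly K}) : (size (Dalpha alpha f) <= size f)%N.
Proof.
by rewrite (leq_trans (size_polyD _ _)) // size_comp_poly2 ?size_XaddC // maxnn.
Qed.

Lemma XsubC_mul_shift (r : K) :
  ('X - r%:P) * ('X - (r + alpha)%:P) = ('X - (r * (r + alpha))%:P) \Po u.
Proof.
rewrite comp_polyB comp_polyX comp_polyC polyCM polyCD.
have two0 : 2%:R = 0 :> {poly K} by rewrite -polyC_natr (pcharf0 hK).
transitivity (u - r%:P * (r%:P + alpha%:P) +
              2%:R * (r%:P * (r%:P + alpha%:P) - (r%:P + alpha%:P) * 'X)).
  by ring.
by rewrite two0 mul0r addr0.
Qed.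

Lemma mul_shift_eq (x y : K) :
  x * (x + alpha) = y * (y + alpha) -> y = x \/ y = x + alpha.
Proof.
move=> e; have : (y - x) * (y + x + alpha) = y * (y + alpha) - x * (x + alpha).
  by ring.
rewrite -e subrr => /eqP; rewrite mulf_eq0 subr_eq0 => /orP[/eqP|]; first by left.
by rewrite -addrA addr_eq0 oppr_pchar2 // => /eqP; right.
Qed.

Lemma deriv_Dalpha_odd_power (d : nat) :
  (Dalpha alpha 'X^(d.*2.+1))^`() = (shift ^+ d + 'X^d) ^+ 2.
Proof.
rewrite /Dalpha derivD deriv_comp derivXn derivD derivX derivC addr0 mulr1 /=.
rewrite mulrS -muln2 mulrnA mulr2n addrr_pchar2 ?pchar2_poly // addr0.
by rewrite comp_Xn_poly sqrrD_pchar2 ?pchar2_poly // -!exprM muln2.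
Qed.

Lemma size_shift_exp_addXn (d : nat) : (size (shift ^+ d + 'X^d)%R <= d)%N.
Proof.
have monic_shift : shift ^+ d \is monic by rewrite monic_exp ?monicXaddC.
have size_shift : size (shift ^+ d) = d.+1.
  by rewrite polySpred ?monic_neq0 // size_exp size_XaddC mul1n.
apply/leq_sizeP => j; rewrite leq_eqVlt => /orP[/eqP<-|hj].
  have lead1 : (shift ^+ d)`_d = 1 by rewrite -(monicP monic_shift) lead_coefE size_shift.
  by rewrite coefD coefXn eqxx lead1 addrr_pchar2.
by rewrite coefD coefXn gtn_eqF // addr0 nth_default // size_shift.
Qed.

(* The roots of (X + alpha)^d + X^d are the [rho t] with [t ^+ d = 1] and [t != 1]. *)
Definition rho (t : K) : K := alpha / (1 + t).

Lemma rho_addr (t : K) : t != 1 -> rho t + alpha = t * rho t.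
Proof.
move=> t1; transitivity (t * rho t + 2%:R * rho t).
  by rewrite /rho; field; rewrite add1r_eq0.
by rewrite (pcharf0 hK) mul0r addr0.
Qed.

Lemma rhoV (t : K) : t != 0 -> t != 1 -> rho t^-1 = rho t + alpha.
Proof.
move=> t0 t1; rewrite rho_addr // /rho; field.
by rewrite add1r_eq0 t1.
Qed.

Lemma tau_ofE (t : K) : t != 1 -> tau_of alpha t = rho t * (rho t + alpha).
Proof.
move=> t1; rewrite /tau_of /rho.
have -> : 1 + t ^+ 2 = (1 + t) ^+ 2.
  by rewrite sqrrD_pchar2 // expr1n.
by field; rewrite add1r_eq0.
Qed.

Lemma root_rho (d : nat) (t : K) :
  t ^+ d = 1 -> t != 1 -> root (shift ^+ d + 'X^d) (rho t).
Proof.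
move=> td t1; rewrite /root !hornerE rho_addr // exprMn td mul1r.
by rewrite addrr_pchar2.
Qed.

Lemma prod_XsubC_rho (s : seq K) : 0 \notin s -> 1 \notin s ->
  \prod_(z <- [seq rho t | t <- s ++ map GRing.inv s]) ('X - z%:P) =
  (\prod_(t <- s) ('X - (tau_of alpha t)%:P)) \Po u.
Proof.
move=> s0 s1; rewrite map_cat big_cat /= !big_map -big_split rmorph_prod /=.
apply: eq_big_seq => t ts.
have t0 : t != 0 by apply: contraNneq s0 => <-.
have t1 : t != 1 by apply: contraNneq s1 => <-.
by rewrite rhoV // tau_ofE // XsubC_mul_shift.
Qed.

Section NonzeroShift.
Hypothesis alpha0 : alpha != 0.

Lemma shift_fixed_constant (r : {poly K}) :
  (size r <= 2)%N -> r \Po shift = r -> r = (r`_0)%:P.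
Proof.
move=> hs hr; set a := r`_0; set b := r`_1.
have rE : r = a%:P + b%:P * 'X.
  apply/polyP => i; rewrite coefD coefC coefCM coefX.
  case: i => [|[|i]]; rewrite ?mulr0 ?mulr1 ?addr0 ?add0r //=.
  by rewrite nth_default // (leq_trans hs).
have : (r \Po shift).[0] = r.[0] by rewrite hr.
rewrite horner_comp rE !hornerE -[RHS]addr0 => /addrI /eqP.
by rewrite mulf_eq0 (negPf alpha0) orbF => /eqP ->; rewrite mul0r addr0.
Qed.

(* Divide by u: both quotient and remainder inherit the invariance, and the
   remainder, of degree at most one, is then constant. *)
Lemma shift_fixed_comp_u (p : {poly K}) :
  p \Po shift = p -> exists q, q \Po u = p.
Proof.
move: {2}(size p) (leqnn (size p)) => k; elim: k p => [|k IH] p hs hp.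
  by exists 0; move: hs; rewrite leqn0 size_poly_eq0 comp_poly0 => /eqP->.
have u0 : u != 0 by rewrite -size_poly_eq0 size_u.
have hdiv := divp_eq p u; set q0 := p %/ u in hdiv; set r := p %% u in hdiv.
have hr : (size r < size u)%N by rewrite ltn_modp.
have hrs : (size (r \Po shift) < size u)%N by rewrite size_comp_poly2 ?size_XaddC.
have e : p = (q0 \Po shift) * u + (r \Po shift).
  by rewrite -[LHS]hp [in LHS]hdiv comp_polyD comp_polyM u_comp_shift.
have hq0 : q0 \Po shift = q0 by rewrite /q0 {2}e divp_addl_mul_small.
have hr0 : r \Po shift = r by rewrite /r {2}e modp_addl_mul_small.
have [q hq] : exists q, q \Po u = q0.
  apply: IH hq0; rewrite /q0 size_divp // size_u.
  by move: hs; case: (size p) => //= s; lia.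
exists (q * 'X + (r`_0)%:P).
rewrite comp_polyD comp_polyM comp_polyX comp_polyC hq -shift_fixed_constant //.
by rewrite -ltnS -size_u.
Qed.

Lemma Lalpha_exists (d : nat) (f : {poly K}) :
  (size f <= d.*2.+2)%N -> exists g, is_Lalpha d alpha f g.
Proof.
move=> hf; have [g hg] := shift_fixed_comp_u (Dalpha_comp_shift f).
exists g; split=> //; have [->|g0] := eqVneq g 0; first by rewrite size_poly0.
have := leq_trans (size_Dalpha f) hf.
rewrite -hg polySpred ?comp_poly_eq0 ?size_u // size_comp_poly size_u.
by move: g0; rewrite -size_poly_gt0 /= -muln2; set s := size g; lia.
Qed.

Lemma rho_inj : {in predC1 1 &, injective rho}.
Proof.
move=> a b; rewrite !inE => a1 b1 /eqP.
by rewrite /rho eqr_div ?add1r_eq0 // => /eqP /(mulfI alpha0) /addrI.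
Qed.

Lemma tau_of_inj (a b : K) : a != 0 -> a != 1 -> b != 1 ->
  tau_of alpha a = tau_of alpha b -> b = a \/ b = a^-1.
Proof.
move=> a0 a1 b1; rewrite !tau_ofE // => /mul_shift_eq[] e; [left | right];
  by apply: rho_inj; rewrite ?inE ?invr_eq1 // e ?rhoV.
Qed.

Lemma shift_exp_addXn_prod (d : nat) (s : seq K) :
  (0 < d)%N -> (size s).*2 = d.-1 -> {in s, forall t, t ^+ d = 1} ->
  1 \notin s -> uniq s -> {in s &, forall a b, a * b != 1} ->
  exists2 c, c != 0 &
    shift ^+ d + 'X^d = c *: (\prod_(t <- s) ('X - (tau_of alpha t)%:P)) \Po u.
Proof.
move=> d0 size_s sd s1 us sV.
have s0 : 0 \notin s.
  by apply/negP => /sd /(exprn_eq1_neq0 d0); rewrite eqxx.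
set ts := s ++ map GRing.inv s.
have tsd : {in ts, forall t, t ^+ d = 1}.
  by move=> t; rewrite mem_cat => /orP[/sd // | /mapP[a /sd ad ->]]; rewrite exprVn ad invr1.
have ts1 : {in ts, forall t, t != 1}.
  move=> t; rewrite mem_cat => /orP[ht|/mapP[a ha ->]]; rewrite ?invr_eq1;
  by apply: contraNneq s1 => <-.
have uts : uniq ts.
  rewrite cat_uniq us (map_inj_uniq invr_inj) us andbT /=.
  apply/hasPn => _ /mapP[a ha ->]; apply/negP => haV.
  by have := sV _ _ haV ha; rewrite mulVf ?eqxx //; apply: contraNneq s0 => <-.
set P := shift ^+ d + 'X^d.
have P0 : P != 0.
  apply: contraNneq (_ : P.[0] != 0) => [->|]; first by rewrite horner0 eqxx.
  by rewrite !hornerE expr0n eqn0Ngt d0 addr0 expf_neq0.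
have rs_root : all (root P) [seq rho t | t <- ts].
  by apply/allP => _ /mapP[t ht ->]; apply: root_rho; [apply: tsd | apply: ts1].
have rs_uniq : uniq [seq rho t | t <- ts].
  by rewrite (map_inj_in_uniq _) // => a b ha hb; apply: rho_inj; rewrite inE ?ts1.
have size_P : (size P <= (size [seq rho t | t <- ts]).+1)%N.
  by rewrite size_map size_cat size_map addnn size_s prednK // size_shift_exp_addXn.
exists (lead_coef P); first by rewrite lead_coef_eq0.
by rewrite comp_polyZ -prod_XsubC_rho //; apply: all_roots_prod_XsubC_leq.
Qed.

Lemma deriv_Lalpha_odd_power (d : nat) (g : {poly K}) (s : seq K) :
  g \Po u = Dalpha alpha 'X^(d.*2.+1) ->
  (0 < d)%N -> (size s).*2 = d.-1 -> {in s, forall t, t ^+ d = 1} ->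
  1 \notin s -> uniq s -> {in s &, forall a b, a * b != 1} ->
  exists2 c, c != 0 &
    g^`() = c%:P * (\prod_(t <- s) ('X - (tau_of alpha t)%:P)) ^+ 2.
Proof.
move=> hg d0 size_s sd s1 us sV.
have [c c0 hP] := shift_exp_addXn_prod d0 size_s sd s1 us sV.
set Q := \prod_(t <- s) _ in hP *.
exists (c ^+ 2 / alpha); first by rewrite mulf_neq0 ?expf_neq0 ?invr_eq0.
have alphaP0 : alpha%:P != 0 by rewrite polyC_eq0.
have := congr1 deriv hg; rewrite deriv_comp deriv_u deriv_Dalpha_odd_power hP.
have -> : ((c *: Q) \Po u) ^+ 2 = ((c ^+ 2 / alpha)%:P * Q ^+ 2 * alpha%:P) \Po u.
  by rewrite mulrAC -polyCM mulfVK // mul_polyC -exprZn rmorphXn.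
rewrite comp_polyM comp_polyC => /(mulIf alphaP0).
by apply: comp_poly_inj; rewrite size_u.
Qed.

End NonzeroShift.

End Char2.

Theorem lemma2p5 (K : closedFieldType) (hK : 2%N \in [pchar K])
  (m n : nat) (hm8 : (8 <= m)%N) (hm4 : (m %% 4 = 0)%N) (hn : (0 < n)%N)
  (alpha : K) (halpha_in : alpha ^+ (2 ^ n) = alpha) (halpha0 : alpha != 0) :
  let d := ((m - 2) %/ 2)%N in
  let f : {poly K} := 'X^(m - 1) in
  (exists g : {poly K}, is_Lalpha d alpha f g) /\
  forall g : {poly K}, is_Lalpha d alpha f g ->
  forall theta : 'I_((d - 1) %/ 2) -> K,
    (forall i, theta i ^+ d = 1) ->
    (forall i, theta i != 1) ->
    injective theta ->
    (forall i j, i != j -> theta i * theta j != 1) ->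
    injective (fun i => tau_of alpha (theta i)) /\
    (forall x : K, mup x g^`() = 2%N <-> exists i, x = tau_of alpha (theta i)).
Proof.
move=> d f; have d0 : (0 < d)%N by rewrite /d; lia.
have hf : (m - 1 = d.*2.+1)%N by rewrite /d -muln2; lia.
split; first by apply: Lalpha_exists; rewrite // size_polyXn hf.
move=> g [_ hg] theta thetad theta1 theta_inj thetaV; rewrite /f hf in hg.
set s := [seq theta i | i <- enum 'I_((d - 1) %/ 2)].
have size_s : (size s).*2 = d.-1 by rewrite size_map size_enum_ord -muln2 /d; lia.
have sd : {in s, forall t, t ^+ d = 1} by move=> _ /mapP[i _ ->].
have theta0 i : theta i != 0 := exprn_eq1_neq0 d0 (thetad i).
have s1 : 1 \notin s by apply/mapP => -[i _ /esym]; apply/eqP.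
have sV : {in s &, forall a b, a * b != 1}.
  move=> _ _ /mapP[i _ ->] /mapP[j _ ->]; have [<-|/thetaV //] := eqVneq i j.
  by rewrite -expr2 sqrf_eq1 oppr_pchar2 // orbb.
have us : uniq s by rewrite map_inj_uniq ?enum_uniq.
have [c c0 ->] := deriv_Lalpha_odd_power hK halpha0 hg d0 size_s sd s1 us sV.
have tau_inj : injective (fun i => tau_of alpha (theta i)).
  move=> i j /(tau_of_inj hK halpha0 (theta0 i) (theta1 i) (theta1 j)).
  case=> [/theta_inj -> // | e]; have [// | /thetaV] := eqVneq i j.
  by rewrite e mulfV ?theta0 ?eqxx.
have uts : uniq [seq tau_of alpha t | t <- s].
  by rewrite -map_comp (map_inj_uniq tau_inj) enum_uniq.
split=> // x; rewrite -(big_map _ xpredT (fun z => 'X - z%:P)) mup_sqr_prod_XsubC //.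
split=> [| [i ->]]; first by case: ifP => // /mapP[_ /mapP[i _ ->] ->]; exists i.
by rewrite map_f ?map_f ?mem_enum.
Qed.
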